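(* For parameters $b>0$, $\sigma>0$, $r\ge0$, $q\ge0$ with $r\neq q$, loan principal $K\ge b$, maturity $T>t\ge0$ and house price $S\ge b$, write $\tau=T-t$, $\theta=\frac{2(r-q)}{\sigma^2}$, $z_1=\frac{\ln(S/K)+(r-q+\frac12\sigma^2)\tau}{\sigma\sqrt\tau}$, $z_2=\frac{\ln(b^2/(KS))+(r-q+\frac12\sigma^2)\tau}{\sigma\sqrt\tau}$, $z_3=\frac{\ln(S/b)+(r-q+\frac12\sigma^2)\tau}{\sigma\sqrt\tau}$, $z_4=\frac{\ln(b/S)+(r-q+\frac12\sigma^2)\tau}{\sigma\sqrt\tau}$, and define $$\begin{aligned}P(t,S)={}&Ke^{-r\tau}\Phi(-z_1+\sigma\sqrt\tau)-Se^{-q\tau}\Phi(-z_1)-be^{-r\tau}\Phi(-z_3+\sigma\sqrt\tau)+Se^{-q\tau}\Phi(-z_3)\\&+\frac1\theta\Bigl(be^{-r\tau}\Phi(-z_3+\sigma\sqrt\tau)-Se^{-q\tau}\bigl(\tfrac bS\bigr)^{1+\theta}\bigl(\Phi(z_4)-\Phi(z_2)\bigr)-Ke^{-r\tau}\bigl(\tfrac Kb\bigr)^{\theta-1}\Phi(z_2-\theta\sigma\sqrt\tau)\Bigr),\end{aligned}$$ where $\Phi$ is the standard normal distribution function. Suppose $r=0$ and $0<q<\frac12\sigma^2$. Then for every fixed $t\ge0$ and $S\ge b$ there exists $T'>t$ such that for all $T>T'$, $P(t,S)<Ke^{-r(T-t)}-Se^{-q(T-t)}$ (i.e. $P(t,S)<K-Se^{-q(T-t)}$),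 violating the lower bound $P(t,S)\ge Ke^{-r(T-t)}-Se^{-q(T-t)}$.
   Context: $P$ is the published pricing formula for a no-negative-equity guarantee (a European put on a house price modelled as a reflected geometric Brownian motion with lower reflecting boundary $b$, volatility $\sigma$, risk-free rate $r$ and deferment rate $q$ playing the role of a dividend yield). Under any equivalent risk-neutral measure the price must satisfy $P(t,S)\ge Ke^{-r(T-t)}-Se^{-q(T-t)}$. *)

From Stdlib Require Import Reals.
From Coquelicot Require Import Coquelicot.
Open Scope R_scope.

Definition phi_density (u : R) : R := exp (- (u * u) / 2) / sqrt (2 * PI).

Definition Phi (x : R) : R := RInt_gen phi_density (Rbar_locally m_infty) (at_point x).

Definition nneg_price (b sigma r q K T t S : R) : R :=
  let tau := T - t in
  let theta := 2 * (r - q) / (sigma ^ 2) in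
  let sst := sigma * sqrt tau in
  let mu := (r - q + sigma ^ 2 / 2) * tau in
  let z1 := (ln (S / K) + mu) / sst in
  let z2 := (ln (b ^ 2 / (K * S)) + mu) / sst in
  let z3 := (ln (S / b) + mu) / sst in
  let z4 := (ln (b / S) + mu) / sst in
  K * exp (- r * tau) * Phi (- z1 + sst) - S * exp (- q * tau) * Phi (- z1)
  - b * exp (- r * tau) * Phi (- z3 + sst) + S * exp (- q * tau) * Phi (- z3)
  + / theta * ( b * exp (- r * tau) * Phi (- z3 + sst)
               - S * exp (- q * tau) * Rpower (b / S) (1 + theta) * (Phi z4 - Phi z2)
               - K * exp (- r * tau) * Rpower (K / b) (theta - 1) * Phi (z2 - theta * sst)).

From Stdlib Require Import Reals Lra.
From Coquelicot Require Import Coquelicot.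
Open Scope R_scope.

(* With r = 0 we have theta < 0. Bound every Phi-value in P by 0 or 1 except
   Phi(-z3 + sigma sqrt tau), and use K (K/b)^(theta-1) <= b: the excess of P
   over K - S e^(-q tau) is at most
     S e^(-q tau) (2 - (b/S)^(1+theta) / theta) - b / theta
       - (1 - 1/theta) b Phi(-z3 + sigma sqrt tau).
   As tau -> oo, e^(-q tau) -> 0 and
   -z3 + sigma sqrt tau = ((q + sigma^2/2) tau - ln (S/b)) / (sigma sqrt tau) -> oo,
   so the bound tends to -b/theta - (1 - 1/theta) b = -b < 0.  The analytic
   input Phi(+oo) = 1 is the Gaussian integral, taken from MathComp-Analysis,
   whose real numbers can be instantiated with Stdlib's R. *)

Module GaussianIntegral.
From mathcomp Require Import ssreflect ssrfun ssrbool eqtype ssrnat ssralg ssrnum.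
From mathcomp Require Import boolp reals.
From mathcomp Require Import topology normedtype derive realfun trigo.
From mathcomp Require Import lebesgue_integral ftc gauss_integral.
From mathcomp Require Import Rstruct Rstruct_topology.
Import GRing.Theory Num.Theory.
Import numFieldNormedType.Exports.
Local Open Scope classical_set_scope.
Local Open Scope ring_scope.
Local Notation RR := (R : realType).

Lemma is_derive_derivable_pt_lim {f : RR -> RR} {x l : RR} :
  derivable_pt_lim f x l -> is_derive x 1 f l.
Proof.
move=> fl.
suff q_cvg : h^-1 *: ((f \o shift x) h%:A - f x) @[h --> 0^'] --> l.
  by apply: DeriveDef; [apply/cvg_ex; exists l | exact: cvg_lim].
apply/cvgrPdist_lt => e /RltP /fl [d dl].
have d0 : 0 < (d : R) by apply/RltP; exact: cond_pos.
near=> h.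
have h0 : h <> 0 by apply/eqP; near: h; exact: nbhs_dnbhs_neq.
rewrite distrC; apply/RltP.
have -> : h^-1 *: ((f \o shift x) h%:A - f x) - l = (f (x + h) - f x) / h - l.
  by rewrite /= [h%:A]mulr1 (addrC h x) mulrC.
apply: dl => //; apply/RltP; rewrite RabsE.
by near: h; apply: nbhs_dnbhs; exact: (@nbhs0_lt _ RR^o).
Unshelve. all: by end_near. Qed.

Lemma pi_PI : pi = PI :> RR.
Proof.
have datan x : is_derive x (1 : RR) (fun y => atan y - Ratan.atan y) 0.
  rewrite -(subrr (1 + x ^+ 2)^-1); apply: is_deriveB.
  by have := is_derive_derivable_pt_lim (Ratan.derivable_pt_lim_atan x); rewrite RinvE RpowE.
have /eqP := is_derive_0_is_cst 1 0 datan.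
rewrite atan1 atan0 Ratan.atan_1 Ratan.atan_0 subrr subr_eq0 RdivE IZRposE INRE.
by move=> /eqP /mulIf; apply; rewrite invr_eq0 pnatr_eq0.
Qed.

Lemma integral0_gauss_primitive (F : RR -> RR) :
  (forall y, derivable_pt_lim F y (exp (- (y * y)))) ->
  forall x, 0 < x -> gauss_integral_proof.integral0_gauss x = F x - F 0.
Proof.
move=> dF x x0.
have {}dF y : is_derive y (1 : RR) F (gauss_fun y).
  by rewrite /gauss_fun -RexpE expr2; exact: is_derive_derivable_pt_lim.
have cF y : {for y, continuous F}.
  by apply: differentiable_continuous; apply/derivable1_diffP; case: (dF y).
rewrite /gauss_integral_proof.integral0_gauss /Rintegral.
rewrite (continuous_FTC2 (F := F)) //=.
- by apply: continuous_subspaceT => y; exact: continuous_gauss_fun.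
- split; first by move=> y _; case: (dF y).
  + by apply: cvg_dnbhs_at_right; apply/continuous_withinNx; exact: cF.
  + by apply: cvg_dnbhs_at_left; apply/continuous_withinNx; exact: cF.
- by move=> y _; rewrite derive1E; case: (dF y).
Qed.

Lemma integral0_gauss_cvg :
  @gauss_integral_proof.integral0_gauss RR x @[x --> +oo] --> Num.sqrt pi / 2.
Proof.
have -> : Num.sqrt pi / 2 = Num.sqrt (pi / 4) :> RR.
  rewrite sqrtrM ?pi_ge0 // sqrtrV // (_ : 4 = 2 ^+ 2) ?sqrtr_sqr ?ger0_norm //.
  by rewrite expr2 -natrM.
have -> : @gauss_integral_proof.integral0_gauss RR =
    Num.sqrt \o (fun x => gauss_integral_proof.integral0_gauss x ^+ 2).
  apply/funext => x /=; rewrite sqrtr_sqr ger0_norm //.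
  exact: gauss_integral_proof.integral0_gauss_ge0.
apply: continuous_cvg; first exact: sqrt_continuous.
exact: gauss_integral_proof.cvg_integral0_gauss_sqr.
Qed.

Lemma is_lim_p_infty_cvg (f : RR -> RR) (l : RR) :
  f x @[x --> +oo] --> l -> is_lim f p_infty l.
Proof.
move=> /cvgrPdist_lt fl P [eps lP].
have eps0 : 0 < pos eps by apply/RltP; exact: cond_pos.
have [M [_ MP]] := fl _ eps0.
exists M => x /RltP /MP /RltP; rewrite distrC => xl; apply: lP.
by rewrite -RabsE in xl.
Qed.

Local Close Scope ring_scope.

Lemma is_lim_gauss_primitive (F : R -> R) :
  (forall y, derivable_pt_lim F y (exp (- (y * y)))) ->
  is_lim (fun x => F x - F 0) p_infty (sqrt PI / 2).
Proof.
move=> dF; apply: is_lim_p_infty_cvg.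
rewrite RdivE RsqrtE IZRposE INRE -pi_PI.
apply: cvg_trans integral0_gauss_cvg; apply: near_eq_cvg; near=> x.
by rewrite (integral0_gauss_primitive _ dF).
Unshelve. all: by end_near. Qed.
End GaussianIntegral.

Lemma continuous_phi_density x : continuous phi_density x.
Proof.
apply (@ex_derive_continuous R_AbsRing R_NormedModule).
unfold phi_density; auto_derive; exact I.
Qed.

Lemma phi_density_pos x : 0 < phi_density x.
Proof.
apply Rdiv_lt_0_compat; [apply exp_pos | apply sqrt_lt_R0].
pose proof PI_RGT_0; lra.
Qed.

Lemma phi_density_opp x : phi_density (- x) = phi_density x.
Proof. unfold phi_density; do 3 f_equal; ring. Qed.

Lemma ex_RInt_phi_density a b : ex_RInt phi_density a b.
Proof.
apply (@ex_RInt_continuous R_CompleteNormedModule).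
intros x _; apply continuous_phi_density.
Qed.

Definition Phi0 (x : R) : R := RInt phi_density 0 x.

Lemma Phi0_0 : Phi0 0 = 0.
Proof. apply (@RInt_point R_CompleteNormedModule). Qed.

Lemma is_derive_Phi0 x : is_derive Phi0 x (phi_density x).
Proof.
apply (is_derive_RInt phi_density Phi0 0).
- apply filter_forall; intros y.
  apply (@RInt_correct R_CompleteNormedModule), ex_RInt_phi_density.
- apply continuous_phi_density.
Qed.

Lemma Phi0_le_compat x y : x <= y -> Phi0 x <= Phi0 y.
Proof.
intros Hxy; unfold Phi0.
rewrite <- (@RInt_Chasles R_CompleteNormedModule phi_density 0 x y)
  by apply ex_RInt_phi_density.
assert (0 <= RInt phi_density x y).
{ apply RInt_ge_0; [exact Hxy | apply ex_RInt_phi_density |].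
  intros z _; left; apply phi_density_pos. }
simpl; unfold plus; simpl; lra.
Qed.

Lemma Phi0_opp x : Phi0 (- x) = - Phi0 x.
Proof.
unfold Phi0.
rewrite <- (@RInt_opp R_CompleteNormedModule) by apply ex_RInt_phi_density.
replace 0 with (-1 * 0 + 0) at 1 by ring.
replace (- x) with (-1 * x + 0) by ring.
rewrite <- (@RInt_comp_lin R_CompleteNormedModule) by apply ex_RInt_phi_density.
apply RInt_ext; intros z _.
replace (-1 * z + 0) with (- z) by ring.
rewrite phi_density_opp; unfold scal, opp; simpl; unfold mult; simpl; ring.
Qed.

Lemma is_lim_scal_pos_p_infty (f : R -> R) (a : R) (x : Rbar) :
  0 < a -> is_lim f x p_infty -> is_lim (fun y => a * f y) x p_infty.
Proof.
intros ha hf.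
pose proof (is_lim_scal_l f a x p_infty hf) as h.
rewrite (is_Rbar_mult_unique a p_infty p_infty) in h; [exact h |].
apply is_Rbar_mult_sym, is_Rbar_mult_p_infty_pos; simpl; lra.
Qed.

Lemma is_lim_Phi0_p_infty : is_lim Phi0 p_infty (1 / 2).
Proof.
pose proof PI_RGT_0 as PI_pos.
assert (sqrt2_pos : 0 < sqrt 2) by (apply sqrt_lt_R0; lra).
assert (sqrtPI_pos : 0 < sqrt PI) by (apply sqrt_lt_R0; lra).
set (F x := sqrt PI * Phi0 (sqrt 2 * x)).
assert (dF : forall y, derivable_pt_lim F y (exp (- (y * y)))).
{ intros y; apply is_derive_Reals.
  replace (exp (- (y * y))) with (sqrt PI * (sqrt 2 * phi_density (sqrt 2 * y))).
  - apply (is_derive_scal (fun x => Phi0 (sqrt 2 * x))).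
    apply (is_derive_comp Phi0 (fun x => sqrt 2 * x)); [apply is_derive_Phi0 |].
    auto_derive; [exact I | ring].
  - unfold phi_density; rewrite sqrt_mult_alt by lra.
    replace (- (sqrt 2 * y * (sqrt 2 * y)) / 2) with (- (y * y)).
    + field; lra.
    + replace (sqrt 2 * y * (sqrt 2 * y)) with (sqrt 2 * sqrt 2 * (y * y)) by ring.
      rewrite sqrt_sqrt by lra; field. }
apply (is_lim_ext (fun y => / sqrt PI * (F (/ sqrt 2 * y) - F 0))).
{ intros y; unfold F.
  rewrite Rmult_0_r, Phi0_0, <- Rmult_assoc, Rinv_r by lra.
  field_simplify; [f_equal; f_equal; field |]; lra. }
replace (Finite (1 / 2)) with (Rbar_mult (/ sqrt PI) (sqrt PI / 2))
  by (simpl; f_equal; field; lra).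
apply is_lim_scal_l.
apply (is_lim_comp (fun z => F z - F 0) (fun y => / sqrt 2 * y) p_infty _ p_infty).
- exact (GaussianIntegral.is_lim_gauss_primitive F dF).
- apply is_lim_scal_pos_p_infty; [apply Rinv_0_lt_compat; lra | apply is_lim_id].
- exists 0; intros y _; discriminate.
Qed.

Lemma Phi0_le_half x : Phi0 x <= 1 / 2.
Proof.
apply (is_lim_le_loc (fun _ => Phi0 x) Phi0 p_infty (Phi0 x) (1 / 2)).
- exists x; intros y Hy; apply Phi0_le_compat; lra.
- apply is_lim_const.
- apply is_lim_Phi0_p_infty.
Qed.

Lemma neg_half_le_Phi0 x : - (1 / 2) <= Phi0 x.
Proof. pose proof (Phi0_le_half (- x)); rewrite Phi0_opp in *; lra. Qed.

Lemma is_lim_Phi0_m_infty : is_lim Phi0 m_infty (- (1 / 2)).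
Proof.
apply (is_lim_ext (fun y => - Phi0 (- y))).
{ intros y; rewrite Phi0_opp; ring. }
apply (is_lim_opp (fun y => Phi0 (- y)) m_infty (1 / 2)).
apply (is_lim_comp Phi0 Ropp m_infty _ p_infty).
- apply is_lim_Phi0_p_infty.
- apply (is_lim_opp (fun y => y) m_infty m_infty), is_lim_id.
- exists 0; intros y _; discriminate.
Qed.

Lemma Phi_Phi0 x : Phi x = 1 / 2 + Phi0 x.
Proof.
assert (DPhi0 : forall y, Derive Phi0 y = phi_density y)
  by (intros y; apply is_derive_unique, is_derive_Phi0).
unfold Phi; apply is_RInt_gen_unique.
replace (1 / 2 + Phi0 x) with (Phi0 x - - (1 / 2)) by ring.
apply (is_RInt_gen_ext (Derive Phi0)).
- apply filter_forall; intros ab y _; apply DPhi0.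
- apply is_RInt_gen_Derive.
  + apply filter_forall; intros ab y _; eexists; apply is_derive_Phi0.
  + apply filter_forall; intros ab y _.
    apply (continuous_ext phi_density); [intros z; rewrite DPhi0; reflexivity |].
    apply continuous_phi_density.
  + apply is_lim_Phi0_m_infty.
  + intros P HP; exact (locally_singleton _ _ HP).
Qed.

Lemma Phi_bounds x : 0 <= Phi x <= 1.
Proof.
rewrite Phi_Phi0; pose proof (Phi0_le_half x); pose proof (neg_half_le_Phi0 x); lra.
Qed.

Lemma is_lim_Phi_p_infty : is_lim Phi p_infty 1.
Proof.
apply (is_lim_ext (fun y => 1 / 2 + Phi0 y)); [intros y; symmetry; apply Phi_Phi0 |].
replace (Finite 1) with (Finite (1 / 2 + 1 / 2)) by (f_equal; field).
apply is_lim_plus'; [apply is_lim_const | apply is_lim_Phi0_p_infty].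
Qed.

Lemma Rpower_mul_le_1 x a : 1 <= x -> a <= -1 -> x * Rpower x a <= 1.
Proof.
intros Hx Ha.
rewrite <- (Rpower_O x), <- (Rpower_1 x) at 1 by lra.
rewrite <- Rpower_plus.
apply Rle_Rpower; lra.
Qed.

Definition nneg_excess_bound (b sigma q S tau : R) : R :=
  let theta := 2 * (0 - q) / sigma ^ 2 in
  let sst := sigma * sqrt tau in
  let z3 := (ln (S / b) + (0 - q + sigma ^ 2 / 2) * tau) / sst in
  S * exp (- q * tau) * (2 - / theta * Rpower (b / S) (1 + theta))
  - / theta * b - (1 - / theta) * b * Phi (- z3 + sst).

Lemma nneg_price_r0_excess_le (b sigma q K T t S : R) :
  0 < b -> 0 < sigma -> 0 < q -> b <= K -> b <= S ->
  nneg_price b sigma 0 q K T t S - (K * exp (- 0 * (T - t)) - S * exp (- q * (T - t)))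
  <= nneg_excess_bound b sigma q S (T - t).
Proof.
intros hb hsigma hq hK hS.
unfold nneg_price, nneg_excess_bound; cbv zeta.
set (theta := 2 * (0 - q) / sigma ^ 2).
set (E := exp (- q * (T - t))).
set (c1 := Rpower (b / S) (1 + theta)).
set (c2 := Rpower (K / b) (theta - 1)).
assert (hs2 : 0 < sigma ^ 2) by (apply pow_lt; lra).
assert (htheta : theta < 0).
{ unfold theta, Rdiv; apply Rmult_neg_pos; [lra | apply Rinv_0_lt_compat; lra]. }
set (u := - / theta).
assert (hu : 0 < u) by (apply Ropp_0_gt_lt_contravar, Rinv_lt_0_compat; lra).
replace (/ theta) with (- u) by (unfold u; ring).
assert (hE : 0 < E) by apply exp_pos.
assert (hc1 : 0 < c1) by apply exp_pos.
assert (hc2 : K * c2 <= b).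
{ assert (hKb : 1 <= K / b).
  { apply (Rmult_le_reg_r b); [lra |].
    unfold Rdiv; rewrite Rmult_assoc, Rinv_l; lra. }
  replace (K * c2) with (b * (K / b * c2)) by (field; lra).
  apply Rle_trans with (b * 1); [| lra].
  apply Rmult_le_compat_l; [lra | apply Rpower_mul_le_1; lra]. }
rewrite Ropp_0, Rmult_0_l, exp_0.
set (sst := sigma * sqrt (T - t)).
set (mu := (0 - q + sigma ^ 2 / 2) * (T - t)).
set (z1 := (ln (S / K) + mu) / sst).
set (z2 := (ln (b ^ 2 / (K * S)) + mu) / sst).
set (z3 := (ln (S / b) + mu) / sst).
set (z4 := (ln (b / S) + mu) / sst).
assert (hSE : 0 < S * E) by (apply Rmult_lt_0_compat; lra).
assert (huSEc1 : 0 < u * (S * E * c1)) by (repeat apply Rmult_lt_0_compat; lra).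
assert (hKc2 : 0 < K * c2) by (apply Rmult_lt_0_compat; [lra | apply exp_pos]).
assert (K * Phi (- z1 + sst) <= K) by (pose proof (Phi_bounds (- z1 + sst)); nra).
assert (0 <= S * E * Phi (- z1)) by (pose proof (Phi_bounds (- z1)); nra).
assert (S * E * Phi (- z3) <= S * E) by (pose proof (Phi_bounds (- z3)); nra).
assert (u * (S * E * c1) * (Phi z4 - Phi z2) <= u * (S * E * c1))
  by (pose proof (Phi_bounds z4); pose proof (Phi_bounds z2); nra).
assert (u * (K * c2 * Phi (z2 - theta * sst)) <= u * b)
  by (pose proof (Phi_bounds (z2 - theta * sst)); apply Rmult_le_compat_l; nra).
lra.
Qed.

Lemma is_lim_exp_neg_mul (q : R) : 0 < q -> is_lim (fun tau => exp (- q * tau)) p_infty 0.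
Proof.
intros hq.
pose proof (is_lim_scal_l (fun y => y) (- q) p_infty p_infty (is_lim_id _)) as h.
rewrite (is_Rbar_mult_unique (- q) p_infty m_infty) in h.
- apply (is_lim_comp exp (fun tau => - q * tau) p_infty 0 m_infty).
  + apply is_lim_exp_m.
  + exact h.
  + exists 0; intros; discriminate.
- apply is_Rbar_mult_sym, is_Rbar_mult_p_infty_neg; simpl; lra.
Qed.

Lemma is_lim_drift_ratio (m L s : R) : 0 < m -> 0 < s ->
  is_lim (fun tau => (m * tau - L) / (s * sqrt tau)) p_infty p_infty.
Proof.
intros hm hs.
apply (is_lim_ext_loc (fun tau => m / s * sqrt tau + - (L / s) * / sqrt tau)).
{ exists 0; intros tau htau.
  assert (0 < sqrt tau) by (apply sqrt_lt_R0; lra).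
  replace (m * tau) with (m * (sqrt tau * sqrt tau)) by (rewrite sqrt_sqrt; lra).
  field; lra. }
assert (hsqrt : is_lim sqrt p_infty p_infty) by apply is_lim_sqrt_p, is_lim_id.
apply (is_lim_plus _ _ p_infty p_infty 0 p_infty).
- apply is_lim_scal_pos_p_infty; [apply Rdiv_lt_0_compat; lra | exact hsqrt].
- replace (Finite 0) with (Rbar_mult (- (L / s)) (Rbar_inv p_infty)) by (simpl; f_equal; ring).
  apply is_lim_scal_l, is_lim_inv; [exact hsqrt | discriminate].
- reflexivity.
Qed.

Lemma is_lim_nneg_excess_bound (b sigma q S : R) : 0 < sigma -> 0 < q ->
  is_lim (nneg_excess_bound b sigma q S) p_infty (- b).
Proof.
intros hsigma hq.
set (theta := 2 * (0 - q) / sigma ^ 2).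
set (c1 := Rpower (b / S) (1 + theta)).
set (B tau := - ((ln (S / b) + (0 - q + sigma ^ 2 / 2) * tau) / (sigma * sqrt tau))
              + sigma * sqrt tau).
assert (hB : is_lim B p_infty p_infty).
{ apply (is_lim_ext_loc (fun tau => ((q + sigma ^ 2 / 2) * tau - ln (S / b)) / (sigma * sqrt tau))).
  - exists 0; intros tau htau; unfold B.
    assert (0 < sqrt tau) by (apply sqrt_lt_R0; lra).
    replace ((q + sigma ^ 2 / 2) * tau)
      with (sigma ^ 2 * (sqrt tau * sqrt tau) - (0 - q + sigma ^ 2 / 2) * tau)
      by (rewrite sqrt_sqrt by lra; field).
    field; lra.
  - apply is_lim_drift_ratio; [nra | lra]. }
assert (hPhiB : is_lim (fun tau => Phi (B tau)) p_infty 1).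
{ apply (is_lim_comp Phi B p_infty 1 p_infty); [apply is_lim_Phi_p_infty | exact hB |].
  exists 0; intros; discriminate. }
apply (is_lim_ext (fun tau => S * exp (- q * tau) * (2 - / theta * c1) - / theta * b
                              - (1 - / theta) * b * Phi (B tau)));
  [reflexivity |].
replace (Finite (- b))
  with (Finite (S * 0 * (2 - / theta * c1) - / theta * b - (1 - / theta) * b * 1))
  by (f_equal; ring).
apply is_lim_minus'; [apply is_lim_minus' |].
- apply (is_lim_scal_r (fun tau => S * exp (- q * tau)) _ p_infty (S * 0)).
  apply (is_lim_scal_l _ S p_infty 0), is_lim_exp_neg_mul, hq.
- apply is_lim_const.
- apply (is_lim_scal_l _ _ p_infty 1), hPhiB.
Qed.

Lemma is_lim_eventually_lt (f : R -> R) (x : Rbar) (l c : R) :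
  is_lim f x l -> l < c -> Rbar_locally' x (fun y => f y < c).
Proof.
intros hf hlc.
apply (hf (fun z => z < c)); exists (mkposreal (c - l) ltac:(lra)); intros z hz.
apply Rabs_def2 in hz; unfold minus, plus, opp in hz; simpl in hz; lra.
Qed.

Lemma eventually_after (t : R) (P : R -> Prop) :
  Rbar_locally' p_infty P -> exists T', t < T' /\ forall T, T' < T -> P (T - t).
Proof.
intros [M HM].
exists (t + Rmax M 1); split.
- pose proof (Rmax_r M 1); lra.
- intros T hT; apply HM; pose proof (Rmax_l M 1); lra.
Qed.

Theorem proposition3p5 (b sigma r q K t S : R)
  (hb : 0 < b) (hsigma : 0 < sigma) (hr0 : 0 <= r) (hq0 : 0 <= q) (hrq : r <> q)
  (hK : b <= K) (ht : 0 <= t) (hS : b <= S)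
  (hr : r = 0) (hq : 0 < q) (hq2 : q < sigma ^ 2 / 2) :
  exists T' : R, t < T' /\
    forall T : R, T' < T ->
      nneg_price b sigma r q K T t S < K * exp (- r * (T - t)) - S * exp (- q * (T - t)).
Proof.
subst r.
destruct (eventually_after t (fun tau => nneg_excess_bound b sigma q S tau < 0))
  as [T' [htT' hT']].
{ apply (is_lim_eventually_lt _ _ (- b)); [apply is_lim_nneg_excess_bound |]; lra. }
exists T'; split; [exact htT' |].
intros T hT.
pose proof (nneg_price_r0_excess_le b sigma q K T t S hb hsigma hq hK hS).
pose proof (hT' T hT).
lra.
Qed.
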